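(* Let $\boldsymbol{q}=(q_0,q_1,\ldots,q_n)$ be any instance of a symbolic generalized matrix chain of $n$ matrices and let $m$ be any index such that $q_m=\min_i q_i$. Let $T_{\rm opt}=\min_{A\in\mathcal{A}}T(A,\boldsymbol{q})$ be the optimal cost on $\boldsymbol{q}$. Then there exists a constant $\hat\alpha>0$ (determined by the kernel cost functions, not by the sizes) such that $T(E^m,\boldsymbol{q})<2\hat\alpha\,T_{\rm opt}$.
   Context: A generalized matrix chain (GMC) is a product $\mathrm{op}(M_1)\cdots\mathrm{op}(M_n)$ where $M_i$ has size $q_{i-1}\times q_i$, $\mathrm{op}(M)\in\{M,M^T,M^{-1},M^{-T}\}$, and each $M_i$ carries a structure (general, symmetric, lower-/upper-triangular; non-general structures imply squareness) and a property (singular, invertible, symmetric positive-definite, orthogonal). The shape is fixed and sizes are symbolic. An instance is $\boldsymbol{q}\in\mathbb{N}^{n+1}$ consistent with the shape ($q_{i-1}=q_i$ whenever $M_i$ is necessarily square, i.e. non-general or inverted). Transposition is ignored. Each parenthesization determines exactly one variant: a sequence of $n-1$ associations $(K_i,(a_i,b_i,c_i))$, $0\le a_i<b_i<c_i\le n$, the $i$-th combining via kernel $K_i$ operands of sizes $q_{a_i}\times q_{b_i}$ and $q_{b_i}\times q_{c_i}$. It is built by performing the leftmost available association first and, per association: propagating an inversion to the result when both operands are inverted ($X^{-1}Y^{-1}=(YX)^{-1}$) or when one operand is inverted and general/symmetric while the other is orthogonal or non-singular triangular; assigning the most specialized matrix-product kernel (GEMM, SYMM, TRMM, SYSYMM,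 TRSYMM, TRTRMM) or linear-solve kernel (GEGESV, GESYSV, GETRSV, SYGESV, SYSYSV, SYTRSV, POGESV, POSYSV, POTRSV, TRSM, TRSYSV, TRTRSV; the inverted operand is the coefficient matrix); and inferring the features and sizes of the result by fixed rules. $\mathcal{A}$ is the set of all variants (one per parenthesization). The cost of variant $A$ on $\boldsymbol{q}$ is $T(A,\boldsymbol{q})=\sum_{(K,(a,b,c))\in A}\phi_K(q_a,q_b,q_c)$, where each kernel cost has one of the forms, with positive kernel-specific constants: Type I $\beta abc$; Type IIa $\beta_1a^3+\beta_2a^2c$; Type IIb $\beta_1c^3+\beta_2c^2a$. Type II kernels are exactly the solves with a non-triangular coefficient matrix and general right-hand side (GEGESV: $\beta_1=2/3,\beta_2=2$; SYGESV, POGESV: $\beta_1=1/3,\beta_2=2$), IIa with the coefficient on the left ($a=b$), IIb on the right ($b=c$); all other kernels are Type I. For $h\in\{0,\ldots,n\}$, the fanning-out variant $E^h\in\mathcal{A}$ is the variant of the parenthesization $(M_1(\cdots(M_{h-1}M_h)\cdots))((\cdots(M_{h+1}M_{h+2})\cdots)M_n)$: the prefix $M_1\cdots M_h$ is computed right-to-left, the suffix $M_{h+1}\cdots M_n$ left-to-right, and then the two partial results are associated (for $h\in\{0,n\}$ the whole chain is computed left-to-right, resp. right-to-left). *)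

From mathcomp Require Import all_boot all_order all_algebra.
Set Implicit Arguments. Unset Strict Implicit. Unset Printing Implicit Defensive.
Import Order.TTheory GRing.Theory Num.Theory.
Local Open Scope ring_scope.

Inductive structure := SGen | SSym | SLow | SUpp.
Inductive property := PSing | PInv | PSPD | POrth.

(* structure, property, and whether the operand appears inverted
   (transposition is ignored). *)
Record feat := Feat { fstruct : structure; fprop : property; finv : bool }.

Definition is_tri (s : structure) : bool :=
  match s with SLow | SUpp => true | _ => false end.
Definition is_gensym (s : structure) : bool :=
  match s with SGen | SSym => true | _ => false end.
Definition is_orth (p : property) : bool :=
  match p with POrth => true | _ => false end.
Definition nonsing (p : property) : bool :=
  match p with PSing => false | _ => true end.

Inductive kname :=
| GEMM | SYMM | TRMM | SYSYMM | TRSYMM | TRTRMM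
| GEGESV | GESYSV | GETRSV | SYGESV | SYSYSV | SYTRSV
| POGESV | POSYSV | POTRSV | TRSM | TRSYSV | TRTRSV.

Definition mulk (s1 s2 : structure) : kname :=
  match s1, s2 with
  | (SLow | SUpp), (SLow | SUpp) => TRTRMM
  | (SLow | SUpp), SSym | SSym, (SLow | SUpp) => TRSYMM
  | SSym, SSym => SYSYMM
  | (SLow | SUpp), SGen | SGen, (SLow | SUpp) => TRMM
  | SSym, SGen | SGen, SSym => SYMM
  | SGen, SGen => GEMM
  end.

Inductive ckind := CGE | CSY | CPO | CTR.   (* coefficient matrix kind *)
Inductive rkind := RGE | RSY | RTR.         (* right-hand side kind *)

Definition coefk (f : feat) : ckind :=
  if is_tri (fstruct f) then CTR else
  match fprop f with
  | PSPD => CPO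
  | _ => match fstruct f with SSym => CSY | _ => CGE end
  end.

Definition rhsk (f : feat) : rkind :=
  match fstruct f with SGen => RGE | SSym => RSY | _ => RTR end.

Definition solvek (c : ckind) (r : rkind) : kname :=
  match c, r with
  | CGE, RGE => GEGESV | CGE, RSY => GESYSV | CGE, RTR => GETRSV
  | CSY, RGE => SYGESV | CSY, RSY => SYSYSV | CSY, RTR => SYTRSV
  | CPO, RGE => POGESV | CPO, RSY => POSYSV | CPO, RTR => POTRSV
  | CTR, RGE => TRSM   | CTR, RSY => TRSYSV | CTR, RTR => TRTRSV
  end.

Definition pstruct (s1 s2 : structure) : structure :=
  match s1, s2 with
  | SLow, SLow => SLow
  | SUpp, SUpp => SUpp
  | _, _ => SGen
  end.
Definition pprop (p1 p2 : property) : property :=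
  if is_orth p1 && is_orth p2 then POrth
  else if nonsing p1 && nonsing p2 then PInv else PSing.

(* the non-inverted operand [o] allows propagating the inversion of the other *)
Definition propagable (o : feat) : bool :=
  is_orth (fprop o) || (is_tri (fstruct o) && nonsing (fprop o)).

(* kernel used when the inversion of [x] (general/symmetric) is propagated
   through the orthogonal or non-singular triangular operand [o]:
   X^-1 Q = (Q^T X)^-1 (multiplication), X^-1 L = (L^-1 X)^-1 (solve with
   triangular coefficient L). *)
Definition prop_kernel (x o : feat) : kname :=
  if is_orth (fprop o) then mulk (fstruct o) (fstruct x)
  else solvek CTR (rhsk x).

(* One association of operands with features x (left) and y (right):
   returns (kernel, coefficient-on-the-left flag, features of the result). *)
Definition combine (x y : feat) : kname * bool * feat :=
  let res b := Feat (pstruct (fstruct x) (fstruct y))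
                    (pprop (fprop x) (fprop y)) b in
  match finv x, finv y with
  | true, true => (mulk (fstruct y) (fstruct x), false, res true)
  | true, false =>
      if is_gensym (fstruct x) && propagable y then (prop_kernel x y, false, res true)
      else (solvek (coefk x) (rhsk y), true, res false)
  | false, true =>
      if is_gensym (fstruct y) && propagable x then (prop_kernel y x, false, res true)
      else (solvek (coefk y) (rhsk x), false, res false)
  | false, false => (mulk (fstruct x) (fstruct y), false, res false)
  end.

Record assoc := Assoc { kn : kname; cleft : bool; ia : nat; ib : nat; ic : nat }.

(* parenthesizations = full binary trees; leaves are the matrices in order *)
Inductive tree := Leaf | Node of tree & tree.

Fixpoint leaves (t : tree) : nat :=
  match t with Leaf => 1%N | Node l r => (leaves l + leaves r)%N end.

(* [build sh t s]: the subchain covered by [t] starts after index [s], i.e.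
   its first matrix is M_{s+1}; returns the features of the result and the
   associations performed (post-order = leftmost available association first). *)
Fixpoint build (sh : nat -> feat) (t : tree) (s : nat) : feat * seq assoc :=
  match t with
  | Leaf => (sh s.+1, [::])
  | Node l r =>
      let b := (s + leaves l)%N in
      let c := (b + leaves r)%N in
      let (fl, al) := build sh l s in
      let (fr, ar) := build sh r b in
      let '(k, cl, f) := combine fl fr in
      (f, al ++ ar ++ [:: Assoc k cl s b c])
  end.

Definition variant (sh : nat -> feat) (t : tree) : seq assoc := (build sh t 0).2.

Fixpoint rcomb (k : nat) : tree :=
  match k with
  | 0 | 1 => Leaf
  | k'.+1 => Node Leaf (rcomb k')
  end.
Fixpoint lcomb (k : nat) : tree :=
  match k with
  | 0 | 1 => Leaf
  | k'.+1 => Node (lcomb k') Leaf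
  end.

(* the fanning-out parenthesization for E^h *)
Definition fan (n h : nat) : tree :=
  if h == 0%N then lcomb n
  else if h == n then rcomb n
  else Node (rcomb h) (lcomb (n - h)).

(* beta : constants of the Type I kernels (the values of beta at the Type II
   kernels GEGESV, SYGESV, POGESV are not used). *)
Definition phi (R : realFieldType) (beta : kname -> R) (q : nat -> nat)
  (x : assoc) : R :=
  let a := (q (ia x))%:R in
  let b := (q (ib x))%:R in
  let c := (q (ic x))%:R in
  let typeII (b1 b2 : R) :=
    if cleft x then b1 * a ^+ 3 + b2 * a ^+ 2 * c
    else b1 * c ^+ 3 + b2 * c ^+ 2 * a in
  match kn x with
  | GEGESV => typeII (2%:R / 3%:R) 2%:R
  | SYGESV | POGESV => typeII (1 / 3%:R) 2%:R
  | K => beta K * a * b * c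
  end.

Definition Tcost (R : realFieldType) (beta : kname -> R) (q : nat -> nat)
  (A : seq assoc) : R := \sum_(x <- A) phi beta q x.

(* M is necessarily square: non-general structure, inverted, or a property
   (invertible / SPD / orthogonal) that only square matrices can have. *)
Definition nec_square (f : feat) : bool :=
  (match fstruct f with SGen => false | _ => true end) || finv f || nonsing (fprop f).

(* q = (q_0,...,q_n) is an instance of the shape (n, sh) (matrices M_1..M_n):
   positive sizes, and q_{i-1} = q_i whenever M_i is necessarily square. *)
Definition instance (n : nat) (sh : nat -> feat) (q : nat -> nat) : Prop :=
  (forall i, (i <= n)%N -> (0 < q i)%N) /\
  (forall i, (1 <= i <= n)%N -> nec_square (sh i) -> q i.-1 = q i).

From Pilot Require Import Defs.
From mathcomp Require Import all_boot all_order all_algebra.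
From mathcomp Require Import lra.
Import Order.TTheory GRing.Theory Num.Theory.
Local Open Scope ring_scope.
Set Implicit Arguments. Unset Strict Implicit.

(* Let mu = q_m.  An association of an a x b by a b x c operand costs at least a
   kernel-independent multiple of abc, and of a^3 (resp. c^3) when its left (resp.
   right) operand is inverted and not triangular: such an operand is either the
   coefficient of a Type II solve, or it forces a = b = c.  Charge every input
   matrix M_i with mu q_(i-1) q_i, plus 3 q_i^3 when M_i is inverted and not
   triangular.  An induction over the parenthesization shows that every variant
   costs at least a constant times W, the total charge plus mu q_0 q_n.
   Conversely, every association of E^m but the last one combines an input matrix
   with a partial product having mu as an outer size (so that, if this partial
   product is inverted and not triangular, it is square of size mu); it therefore
   costs at most a constant times the charge of the input matrix, while the last
   association costs O(mu q_0 q_n).  Hence T(E^m) is also O(W). *)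

Definition inv_nontri (f : feat) : bool := Defs.finv f && ~~ is_tri (fstruct f).

Definition typeII (k : kname) : bool :=
  match k with GEGESV | SYGESV | POGESV => true | _ => false end.

Lemma inv_nontri_square f : inv_nontri f -> nec_square f.
Proof. by case: f => [[] [] []]. Qed.

Lemma combineP x y :
  let: (k, cl, f) := combine x y in
  [/\ typeII k -> inv_nontri (if cl then x else y),
      inv_nontri x -> (typeII k && cl) || (nec_square x && nec_square y),
      inv_nontri y -> (typeII k && ~~ cl) || (nec_square x && nec_square y)
    & nec_square f -> nec_square x && nec_square y].
Proof. by case: x y => [[] [] []] [[] [] []]. Qed.

Definition typeII_coef (R : realFieldType) (k : kname) : R :=
  if k is GEGESV then 2%:R / 3%:R else 1 / 3%:R.

Definition node_cost (R : realFieldType) (beta : kname -> R) (k : kname) (cl : bool)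
    (a b c : R) : R :=
  if typeII k then
    if cl then typeII_coef R k * a ^+ 3 + 2%:R * a ^+ 2 * c
    else typeII_coef R k * c ^+ 3 + 2%:R * c ^+ 2 * a
  else beta k * a * b * c.

Lemma phi_Assoc (R : realFieldType) (beta : kname -> R) q k cl s b e :
  phi beta q (Assoc k cl s b e) = node_cost beta k cl (q s)%:R (q b)%:R (q e)%:R.
Proof. by case: k. Qed.

Lemma expr3 (R : pzSemiRingType) (x : R) : x ^+ 3 = x * x * x.
Proof. by rewrite !exprS expr0 mulr1 mulrA. Qed.

Definition cond_cube (R : realFieldType) (p : bool) (z : R) : R := if p then z ^+ 3 else 0.

Section NodeCost.
Variables (R : realFieldType) (beta : kname -> R).

Lemma typeII_coef_bounds k : 1 / 3%:R <= typeII_coef R k <= 1.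
Proof. by case: k; apply/andP; split; rewrite /typeII_coef; lra. Qed.

Lemma cond_cube_ge0 p (z : R) : 0 <= z -> 0 <= cond_cube p z.
Proof. by case: p => //= z0; rewrite exprn_ge0. Qed.

Lemma cond_cube_le (p : bool) (x y z : R) : 0 <= x -> 0 <= y -> 0 <= z ->
  (p -> y = z /\ z <= x) -> cond_cube p z <= x * y * z.
Proof.
case: p => x0 y0 z0 /=; last by rewrite !mulr_ge0.
by case=> // -> zx; rewrite expr3 !ler_wpM2r.
Qed.

Lemma typeII_cost_lower (g w a c : R) : g <= 1 / 3%:R -> 1 / 3%:R <= w -> 0 < a -> 0 < c ->
  let P := w * a ^+ 3 + 2%:R * a ^+ 2 * c in
  g * (a * a * c) <= P /\ g * a ^+ 3 <= P.
Proof.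
move=> g13 w13 a0 c0 /=.
have aac0 : 0 < a * a * c by rewrite !mulr_gt0.
have aaa0 : 0 < a * a * a by rewrite !mulr_gt0.
rewrite expr3 expr2; split; nra.
Qed.

Lemma node_cost_lower (g : R) x y k cl f (a b c : R) :
  (forall K, g <= beta K) -> g <= 1 / 3%:R -> 0 < a -> 0 < b -> 0 < c ->
  (nec_square x -> a = b) -> (nec_square y -> b = c) -> combine x y = (k, cl, f) ->
  [/\ g * (a * b * c) <= node_cost beta k cl a b c,
      inv_nontri x -> g * a ^+ 3 <= node_cost beta k cl a b c
    & inv_nontri y -> g * c ^+ 3 <= node_cost beta k cl a b c].
Proof.
move=> g_beta g13 a0 b0 c0 sqx sqy E; have := combineP x y; rewrite {}E => -[coef xc yc _].
have /andP[w13 _] := typeII_coef_bounds k.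
have costl := typeII_cost_lower g13 w13 a0 c0; have costr := typeII_cost_lower g13 w13 c0 a0.
have low : g * (a * b * c) <= node_cost beta k cl a b c.
  rewrite /node_cost; case: ifP => [tk | _]; last first.
    by rewrite -!mulrA ler_pM2r ?g_beta // !mulr_gt0.
  move: coef; rewrite tk; clear xc yc; case: cl => /(_ isT)/inv_nontri_square.
    by move/sqx <-; case: costl.
  by move/sqy ->; rewrite /= [a * c]mulrC mulrAC; case: costr.
split=> // [/xc | /yc]; case/orP.
- by case/andP=> tk ->; rewrite /node_cost tk; case: costl.
- by case/andP=> /sqx ab /sqy bc; move: low; rewrite -bc -ab expr3.
- by case/andP=> tk /negbTE ncl; rewrite /node_cost tk ncl; case: costr.
- by case/andP=> /sqx ab /sqy bc; move: low; rewrite ab bc expr3.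
Qed.

Lemma typeII_cost_upper (B w a c : R) : 2%:R <= B -> w <= 1 -> 0 < a -> 0 < c ->
  w * a ^+ 3 + 2%:R * a ^+ 2 * c <= B * (a * a * c + a ^+ 3).
Proof.
move=> B2 w1 a0 c0.
have aac0 : 0 < a * a * c by rewrite !mulr_gt0.
have aaa0 : 0 < a * a * a by rewrite !mulr_gt0.
rewrite expr3 expr2; nra.
Qed.

Lemma node_cost_upper (B : R) x y k cl f (a b c : R) :
  (forall K, beta K <= B) -> 2%:R <= B -> 0 < a -> 0 < b -> 0 < c ->
  (nec_square x -> a = b) -> (nec_square y -> b = c) -> combine x y = (k, cl, f) ->
  node_cost beta k cl a b c <=
  B * (a * b * c + cond_cube (inv_nontri x) a + cond_cube (inv_nontri y) c).
Proof.
move=> beta_B B2 a0 b0 c0 sqx sqy E; have := combineP x y; rewrite {}E => -[coef _ _ _].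
have /andP[_ w1] := typeII_coef_bounds k.
have B0 : 0 < B := lt_le_trans (ltr0Sn R 1) B2.
have cx0 := cond_cube_ge0 (inv_nontri x) (ltW a0).
have cy0 := cond_cube_ge0 (inv_nontri y) (ltW c0).
rewrite /node_cost; case: ifP => [tk | _]; last first.
  apply: (le_trans (y := B * (a * b * c))); last by rewrite ler_pM2l // -addrA lerDl addr_ge0.
  by rewrite -!mulrA ler_pM2r ?beta_B // !mulr_gt0.
move: coef; rewrite tk; case: cl => /(_ isT) xc.
  rewrite -(sqx (inv_nontri_square xc)) /cond_cube xc.
  apply: le_trans (typeII_cost_upper B2 w1 a0 c0) _.
  by rewrite ler_pM2l ?lerDl.
rewrite (sqy (inv_nontri_square xc)) /cond_cube xc.
apply: le_trans (typeII_cost_upper B2 w1 c0 a0) _.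
by rewrite ler_pM2l // [a * c]mulrC mulrAC -addrA lerD2l lerDr.
Qed.

Lemma ler_link_bound (B u X Y : R) : 0 <= B -> 0 <= X -> Y <= u ->
  B * (u + X + Y) <= 2%:R * B * (u + 3%:R * X).
Proof. move=> B0 X0 Yu; nra. Qed.

End NodeCost.

Lemma leaves_rcomb k : leaves (rcomb k.+1) = k.+1.
Proof. by elim: k => //= k ->; rewrite add1n. Qed.

Lemma leaves_lcomb k : leaves (lcomb k.+1) = k.+1.
Proof. by elim: k => //= k ->; rewrite addn1. Qed.

Lemma build_Node sh l r s :
  let: (k, cl, f) := combine (build sh l s).1 (build sh r (s + leaves l)%N).1 in
  build sh (Node l r) s =
    (f, (build sh l s).2 ++ (build sh r (s + leaves l)%N).2 ++
        [:: Assoc k cl s (s + leaves l)%N (s + leaves l + leaves r)%N]).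
Proof.
rewrite /=; case: (build sh l s) => fl al; case: (build sh r _) => fr ar /=.
by case: (combine fl fr) => [[k cl] f].
Qed.

Lemma Tcost_build_Node (R : realFieldType) (beta : kname -> R) q sh l r s :
  let: (k, cl, f) := combine (build sh l s).1 (build sh r (s + leaves l)%N).1 in
  Tcost beta q (build sh (Node l r) s).2 =
    Tcost beta q (build sh l s).2 + Tcost beta q (build sh r (s + leaves l)%N).2 +
    node_cost beta k cl (q s)%:R (q (s + leaves l)%N)%:R (q (s + leaves l + leaves r)%N)%:R.
Proof.
have := build_Node sh l r s; case: (combine _ _) => [[k cl] f] ->.
by rewrite /Tcost /= !big_cat /= big_seq1 phi_Assoc addrA.
Qed.

Lemma Tcost_Leaf (R : realFieldType) (beta : kname -> R) q sh s :
  Tcost beta q (build sh Leaf s).2 = 0.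
Proof. exact: big_nil. Qed.

Lemma build_square n sh q t s : instance n sh q -> (s + leaves t <= n)%N ->
  nec_square (build sh t s).1 -> q s = q (s + leaves t)%N.
Proof.
case=> _ sq; elim: t s => [|l IHl r IHr] s hn.
  by rewrite /= addn1 in hn *; apply: sq; rewrite hn.
rewrite [leaves _]/= addnA in hn *.
have := combineP (build sh l s).1 (build sh r (s + leaves l)%N).1.
have := build_Node sh l r s; case: (combine _ _) => [[k cl] f] -> [_ _ _ fsq].
move=> /fsq /andP[sql sqr].
have hl : (s + leaves l <= n)%N by apply: leq_trans hn; rewrite leq_addr.
by rewrite (IHl s hl sql) (IHr _ hn sqr).
Qed.

Section Instance.
Variables (R : realFieldType) (beta : kname -> R) (n : nat) (sh : nat -> feat).
Variables (q : nat -> nat) (mu : nat).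

Definition inv_cube (j : nat) : R := cond_cube (inv_nontri (sh j)) (q j)%:R.

Definition link_weight (i : nat) : R :=
  mu%:R * (q i)%:R * (q i.+1)%:R + 3%:R * inv_cube i.+1.

Definition weight (s e : nat) : R := \sum_(s <= i < e) link_weight i.

Lemma inv_cube_ge0 j : 0 <= inv_cube j.
Proof. exact: cond_cube_ge0. Qed.

Lemma weight_ge0 s e : 0 <= weight s e.
Proof.
by apply: sumr_ge0 => i _; rewrite addr_ge0 ?mulr_ge0 ?inv_cube_ge0.
Qed.

Lemma weight_cat s b e : (s <= b <= e)%N -> weight s e = weight s b + weight b e.
Proof. by case/andP=> sb be; rewrite /weight -big_cat_nat. Qed.

Lemma weight1 s : weight s s.+1 = link_weight s.
Proof. exact: big_nat1. Qed.

Hypotheses (q_inst : instance n sh q) (mu_min : forall i, (i <= n)%N -> (mu <= q i)%N).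

Lemma q_gt0 i : (i <= n)%N -> 0 < (q i)%:R :> R.
Proof. by move=> i_n; rewrite ltr0n q_inst.1. Qed.

Lemma mu_le_q i : (i <= n)%N -> mu%:R <= (q i)%:R :> R.
Proof. by move=> i_n; rewrite ler_nat mu_min. Qed.

Lemma build_square_eq t s : (s + leaves t <= n)%N ->
  nec_square (build sh t s).1 -> (q s)%:R = (q (s + leaves t)%N)%:R :> R.
Proof. by move=> hn /(build_square q_inst hn) ->. Qed.

Lemma leaf_square_eq s : (s < n)%N -> nec_square (sh s.+1) -> (q s)%:R = (q s.+1)%:R :> R.
Proof. by move=> hs /(q_inst.2 s.+1 hs) ->. Qed.

Section Lower.
Variable g : R.
Hypotheses (g_ge0 : 0 <= g) (g_le_beta : forall K, g <= beta K) (g_le3 : g <= 1 / 3%:R).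

Lemma weight_child_le t s P : (s + leaves t <= n)%N -> 0 <= P ->
  g * (mu%:R * (q s)%:R * (q (s + leaves t)%N)%:R) <= P ->
  (inv_nontri (build sh t s).1 -> g * (q (s + leaves t)%N)%:R ^+ 3 <= P) ->
  (t <> Leaf -> g * (weight s (s + leaves t)%N + mu%:R * (q s)%:R * (q (s + leaves t)%N)%:R)
                <= 9%:R * Tcost beta q (build sh t s).2) ->
  g * weight s (s + leaves t)%N <= 9%:R * Tcost beta q (build sh t s).2 + 4%:R * P.
Proof.
case: t => [|l r] hn P0 muP cubeP IH; last first.
  have {}IH := IH ltac:(by []); rewrite mulrDr in IH.
  have : 0 <= g * (mu%:R * (q s)%:R * (q (s + leaves (Node l r))%N)%:R) by rewrite !mulr_ge0.
  lra.
rewrite /= addn1 in muP cubeP *.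
rewrite weight1 /Tcost big_nil mulr0 add0r /link_weight /inv_cube /cond_cube mulrDr.
by case: ifP => [/cubeP | _]; lra.
Qed.

(* A leaf costs nothing: its charge is paid by the association consuming it, at
   most 4 times the cost of that association; hence the constant 9 = 4 + 4 + 1. *)
Lemma Tcost_build_lower t s : (s + leaves t <= n)%N -> t <> Leaf ->
  g * (weight s (s + leaves t)%N + mu%:R * (q s)%:R * (q (s + leaves t)%N)%:R)
  <= 9%:R * Tcost beta q (build sh t s).2.
Proof.
elim: t s => [//|l IHl r IHr] s hn _.
rewrite [leaves _]/= addnA in hn *.
have := Tcost_build_Node beta q sh l r s; case E: (combine _ _) => [[k cl] f] ->.
have hl : (s + leaves l <= n)%N by apply: leq_trans hn; rewrite leq_addr.
have hs : (s <= n)%N by apply: leq_trans hl; rewrite leq_addr.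
have [lowP xP yP] := node_cost_lower g_le_beta g_le3 (q_gt0 hs) (q_gt0 hl)
  (q_gt0 hn) (build_square_eq hl) (build_square_eq hn) E.
set b := (s + leaves l)%N in hl lowP xP yP *; set e := (b + leaves r)%N in hn lowP xP yP *.
set P := node_cost _ _ _ _ _ _ in lowP xP yP *.
have g_mu (x y z : R) : 0 <= x -> 0 <= y -> mu%:R <= z ->
    g * (mu%:R * x * y) <= g * (x * y * z).
  move=> x0 y0 mz; apply: ler_wpM2l => //.
  by rewrite -mulrA mulrC; apply: ler_wpM2l => //; rewrite mulr_ge0.
have a0 := ltW (q_gt0 hs); have b0 := ltW (q_gt0 hl).
have c0 := ltW (q_gt0 hn).
have P0 : 0 <= P by apply: le_trans lowP; rewrite !mulr_ge0.
have lP := g_mu _ _ _ a0 b0 (mu_le_q hn).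
have rP := g_mu _ _ _ b0 c0 (mu_le_q hs).
have mP := g_mu _ _ _ a0 c0 (mu_le_q hl).
have left : g * weight s b <= 9%:R * Tcost beta q (build sh l s).2 + 4%:R * P.
  apply: weight_child_le (IHl s hl) => //; first lra.
  by move=> /[dup] /inv_nontri_square /(build_square_eq hl) <- /xP.
have right : g * weight b e <= 9%:R * Tcost beta q (build sh r b).2 + 4%:R * P.
  by apply: weight_child_le yP (IHr b hn) => //; lra.
rewrite (@weight_cat s b e) ?leq_addr // mulrDr.
lra.
Qed.

End Lower.

Section Upper.
Variable B : R.
Hypotheses (beta_le_B : forall K, beta K <= B) (two_le_B : 2%:R <= B).

Let B_gt0 : 0 < B := lt_le_trans (ltr0Sn R 1) two_le_B.

Lemma Tcost_rcomb_upper k s : (s + k.+1 <= n)%N -> q (s + k.+1)%N = mu ->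
  Tcost beta q (build sh (rcomb k.+1) s).2 <= 2%:R * B * weight s (s + k.+1)%N.
Proof.
have B0 := ltW B_gt0.
elim: k s => [|k IH] s hn qe; first by rewrite Tcost_Leaf !mulr_ge0 ?weight_ge0.
have := Tcost_build_Node beta q sh Leaf (rcomb k.+1) s.
case E: (combine _ _) => [[k' cl] f] ->.
rewrite [leaves Leaf]/= addn1 in E *; rewrite leaves_rcomb addSnnS Tcost_Leaf add0r.
have hb : (s.+1 <= n)%N by apply: leq_trans hn; rewrite -addn1 leq_add2l.
have hs : (s <= n)%N := ltnW hb.
have sqy : nec_square (build sh (rcomb k.+1) s.+1).1 -> (q s.+1)%:R = mu%:R :> R.
  by move/build_square_eq; rewrite leaves_rcomb addSnnS qe; apply.
have mu_gt0 : 0 < mu%:R :> R by rewrite -qe q_gt0.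
have := node_cost_upper beta_le_B two_le_B (q_gt0 hs) (q_gt0 hb) mu_gt0
  (leaf_square_eq hb) sqy E.
rewrite qe (@weight_cat s s.+1) ?weight1 /link_weight; last by rewrite leqnSn -addn1 leq_add2l.
have cx : cond_cube (inv_nontri (sh s.+1)) (q s)%:R = inv_cube s.+1.
  rewrite /inv_cube /cond_cube; case: ifP => // /inv_nontri_square sq.
  by rewrite (leaf_square_eq hb sq).
rewrite cx.
have cy : cond_cube (inv_nontri (build sh (rcomb k.+1) s.+1).1) mu%:R
           <= (q s)%:R * (q s.+1)%:R * mu%:R :> R.
  apply: cond_cube_le (ltW (q_gt0 hs)) (ltW (q_gt0 hb)) (ltW mu_gt0) _.
  by move=> /inv_nontri_square/sqy ->; split; last exact: mu_le_q.
have := IH s.+1; rewrite addSnnS => /(_ hn qe).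
have := ler_link_bound B0 (inv_cube_ge0 s.+1) cy.
lra.
Qed.

Lemma Tcost_lcomb_upper k s : (s + k.+1 <= n)%N -> q s = mu ->
  Tcost beta q (build sh (lcomb k.+1) s).2 <= 2%:R * B * weight s (s + k.+1)%N.
Proof.
have B0 := ltW B_gt0.
move=> + qs; elim: k => [|k IH] hn; first by rewrite Tcost_Leaf !mulr_ge0 ?weight_ge0.
have := Tcost_build_Node beta q sh (lcomb k.+1) Leaf s.
case E: (combine _ _) => [[k' cl] f] ->.
rewrite leaves_lcomb in E *; rewrite [leaves Leaf]/= addn1 Tcost_Leaf addr0.
rewrite addnS in hn *; set b := (s + k.+1)%N in hn E IH *.
have hb : (b <= n)%N := ltnW hn.
have hs : (s <= n)%N by apply: leq_trans hb; rewrite leq_addr.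
have sqx : nec_square (build sh (lcomb k.+1) s).1 -> mu%:R = (q b)%:R :> R.
  by move/build_square_eq; rewrite leaves_lcomb qs; apply.
have mu_gt0 : 0 < mu%:R :> R by rewrite -qs q_gt0.
have := node_cost_upper beta_le_B two_le_B mu_gt0 (q_gt0 hb) (q_gt0 hn)
  sqx (leaf_square_eq hn) E.
rewrite qs (@weight_cat s b b.+1) ?weight1 /link_weight -/(inv_cube b.+1); last first.
  by rewrite leq_addr leqnSn.
have cx : cond_cube (inv_nontri (build sh (lcomb k.+1) s).1) mu%:R
           <= (q b.+1)%:R * (q b)%:R * mu%:R :> R.
  apply: cond_cube_le (ltW (q_gt0 hn)) (ltW (q_gt0 hb)) (ltW mu_gt0) _.
  by move=> /inv_nontri_square/sqx <-; split; last exact: mu_le_q.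
have := IH hb.
have := ler_link_bound B0 (inv_cube_ge0 b.+1) cx.
lra.
Qed.

Lemma Tcost_fan_Node_upper m k : (m.+1 + k.+1 = n)%N -> q m.+1 = mu ->
  Tcost beta q (build sh (Node (rcomb m.+1) (lcomb k.+1)) 0).2 <=
  3%:R * B * (weight 0 n + mu%:R * (q 0)%:R * (q n)%:R).
Proof.
move=> mkn qm; have B0 := ltW B_gt0.
have mn : (m.+1 <= n)%N by rewrite -mkn leq_addr.
have a0 := q_gt0 (leq0n n); have c0 := q_gt0 (leqnn n).
have mu_gt0 : 0 < mu%:R :> R by rewrite -qm q_gt0.
have := Tcost_build_Node beta q sh (rcomb m.+1) (lcomb k.+1) 0.
case E: (combine _ _) => [[k' cl] f] ->.
rewrite leaves_rcomb leaves_lcomb add0n mkn in E *.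
have sqx : nec_square (build sh (rcomb m.+1) 0).1 -> (q 0)%:R = mu%:R :> R.
  by move/build_square_eq; rewrite leaves_rcomb qm; apply.
have sqy : nec_square (build sh (lcomb k.+1) m.+1).1 -> mu%:R = (q n)%:R :> R.
  by move/build_square_eq; rewrite leaves_lcomb mkn qm; apply.
have := node_cost_upper beta_le_B two_le_B a0 mu_gt0 c0 sqx sqy E.
have cx : cond_cube (inv_nontri (build sh (rcomb m.+1) 0).1) (q 0)%:R
           <= (q n)%:R * mu%:R * (q 0)%:R :> R.
  apply: cond_cube_le (ltW c0) (ltW mu_gt0) (ltW a0) _.
  by move=> /inv_nontri_square/sqx ->; split; last exact: mu_le_q.
have cy : cond_cube (inv_nontri (build sh (lcomb k.+1) m.+1).1) (q n)%:R
           <= (q 0)%:R * mu%:R * (q n)%:R :> R.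
  apply: cond_cube_le (ltW a0) (ltW mu_gt0) (ltW c0) _.
  by move=> /inv_nontri_square/sqy <-; split; last exact: mu_le_q.
have := ler_wpM2l B0 cx; have := ler_wpM2l B0 cy.
have := Tcost_rcomb_upper (k := m) (s := 0); rewrite add0n => /(_ mn qm).
have := Tcost_lcomb_upper (k := k) (s := m.+1); rewrite mkn => /(_ (leqnn n) qm).
rewrite qm (@weight_cat 0 m.+1 n) ?leq0n //.
have := mulr_ge0 B0 (weight_ge0 0 m.+1); have := mulr_ge0 B0 (weight_ge0 m.+1 n).
lra.
Qed.

Lemma Tcost_fan_upper m : (2 <= n)%N -> (m <= n)%N -> q m = mu ->
  Tcost beta q (variant sh (fan n m)) <=
  3%:R * B * (weight 0 n + mu%:R * (q 0)%:R * (q n)%:R).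
Proof.
move=> n2 mn qm; have B0 := ltW B_gt0.
have n0 : (0 < n)%N by apply: leq_trans n2.
have W0 := mulr_ge0 B0 (weight_ge0 0 n).
have M0 : 0 <= B * (mu%:R * (q 0)%:R * (q n)%:R) by rewrite !mulr_ge0.
rewrite /variant /fan; case: eqP => [m0 | /eqP m_neq0].
  rewrite m0 in qm; have := @Tcost_lcomb_upper n.-1 0; rewrite add0n prednK //.
  by move=> /(_ (leqnn n) qm); lra.
case: eqP => [m_eqn | /eqP m_neqn].
  rewrite m_eqn in qm; have := @Tcost_rcomb_upper n.-1 0; rewrite add0n prednK //.
  by move=> /(_ (leqnn n) qm); lra.
case: m m_neq0 m_neqn mn qm => [//|m] _ m_neqn mn qm.
have [k nmk] : exists k, (n - m.+1 = k.+1)%N.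
  by exists (n - m.+1).-1; rewrite prednK // subn_gt0 ltn_neqAle m_neqn.
by rewrite nmk; apply: Tcost_fan_Node_upper qm; rewrite -nmk subnKC.
Qed.

End Upper.

End Instance.

Lemma seq_lower_bound (R : realDomainType) (T : Type) (f : T -> R) (s : seq T) (c : R) :
  0 < c -> (forall x, List.In x s -> 0 < f x) ->
  exists g, [/\ 0 < g, g <= c & forall x, List.In x s -> g <= f x].
Proof.
move=> c0; elim: s => [_ | y s IH f_gt0]; first by exists c.
have [g [g0 gc gs]] := IH (fun x sx => f_gt0 x (or_intror sx)).
exists (Num.min g (f y)); split.
- by rewrite lt_min g0 f_gt0 //; left.
- by rewrite ge_min gc.
- by move=> x [<- | /gs gx]; rewrite ge_min ?lexx ?orbT // gx.
Qed.

Lemma seq_upper_bound (R : realDomainType) (T : Type) (f : T -> R) (s : seq T) (c : R) :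
  exists B, c <= B /\ forall x, List.In x s -> f x <= B.
Proof.
elim: s => [|y s [B [cB sB]]]; first by exists c.
exists (Num.max B (f y)); split.
- by rewrite le_max cB.
- by move=> x [<- | /sB xB]; rewrite le_max ?lexx ?orbT // xB.
Qed.

Definition kernels : seq kname :=
  [:: GEMM; SYMM; TRMM; SYSYMM; TRSYMM; TRTRMM; GEGESV; GESYSV; GETRSV;
      SYGESV; SYSYSV; SYTRSV; POGESV; POSYSV; POTRSV; TRSM; TRSYSV; TRTRSV].

Lemma kernels_complete K : List.In K kernels.
Proof. by case: K => /=; do ?[left; reflexivity | right]. Qed.

Unset Implicit Arguments.

Theorem lemma2 (R : realFieldType) (beta : kname -> R)
  (hbeta : forall K, 0 < beta K) :
  exists alpha : R, 0 < alpha /\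
    forall (n : nat) (sh : nat -> feat) (q : nat -> nat),
      (2 <= n)%N -> instance n sh q ->
      forall m : nat, (m <= n)%N -> (forall i, (i <= n)%N -> (q m <= q i)%N) ->
      forall t : tree, leaves t = n ->
        Tcost beta q (variant sh (fan n m)) < 2%:R * alpha * Tcost beta q (variant sh t).
Proof.
have [g [g_gt0 g_le3 g_le]] :=
  seq_lower_bound (f := beta) (s := kernels) (c := 1 / 3%:R) ltac:(lra) (fun K _ => hbeta K).
have [B [B_ge2 B_ge]] := seq_upper_bound beta kernels 2%:R.
have g_le_beta K : g <= beta K := g_le K (kernels_complete K).
have beta_le_B K : beta K <= B := B_ge K (kernels_complete K).
have B_gt0 : 0 < B := lt_le_trans (ltr0Sn R 1) B_ge2.
have alpha_gt0 : 0 < 27%:R * B / g by rewrite divr_gt0 ?mulr_gt0.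
exists (27%:R * B / g); split => // n sh q n2 q_inst m mn q_min t leaves_t.
have t_node : t <> Leaf by move=> tL; move: n2; rewrite -leaves_t tL.
have := Tcost_build_lower q_inst q_min (ltW g_gt0) g_le_beta g_le3 (s := 0) _ t_node.
rewrite add0n leaves_t => /(_ (leqnn n)) low.
have up := Tcost_fan_upper q_inst q_min beta_le_B B_ge2 n2 mn erefl.
rewrite /variant; move: low up.
set W := weight _ _ _ _ _ _ + _; set T := Tcost _ _ _; set TE := Tcost _ _ _ => low up.
have W_gt0 : 0 < W by rewrite ltr_wpDl ?weight_ge0 // !mulr_gt0 // ltr0n q_inst.1.
have T_gt0 : 0 < T by have := mulr_gt0 g_gt0 W_gt0; lra.
have W_le : W <= 9%:R * T / g by rewrite ler_pdivlMr // mulrC.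
have := ler_wpM2l (ltW B_gt0) W_le; have := mulr_gt0 alpha_gt0 T_gt0.
lra.
Qed.
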